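(* Let $\mathbb{k}$ be a commutative ring, $M$ a $\mathbb{k}$-module with a descending filtration by $\mathbb{k}$-submodules $M=M_0\supseteq M_1\supseteq M_2\supseteq\cdots$, $G^{(1)}\subseteq GL^{(1)}_{\mathbb{k}}(M)$ a subgroup and $T\subseteq \mathrm{End}^{(1)}_{\mathbb{k}}(M)$ a $\mathbb{k}$-submodule. Let $i\ge 1$ and suppose that the pair $(T^{(i)},G^{(i)})$ is of pointwise Lie type, i.e.: (a) for every $\xi\in T^{(i)}$ and every $z\in M$ there exists $g\in G^{(i)}$ such that, if $\mathrm{ord}(\xi(z))<\infty$, then $\mathrm{ord}((g-\mathrm{Id}-\xi)(z))>\mathrm{ord}(\xi(z))$; (b) for every $g\in G^{(i)}$ and every $z\in M$ there exists $\xi\in T^{(i)}$ such that, if $\mathrm{ord}((g-\mathrm{Id})(z))<\infty$, then $\mathrm{ord}((g-\mathrm{Id}-\xi)(z))>\mathrm{ord}((g-\mathrm{Id})(z))$. Then for every $z\in M$ and every integer $N\ge0$: $$\overline{T^{(i)}(z)}\supseteq M_{N+1}\quad\Longleftrightarrow\quad \overline{G^{(i)}z}\supseteq \{z\}+M_{N+1}.$$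
   Context: For $z\in M$, $\mathrm{ord}(z)=\sup\{j: z\in M_j\}$ (equal to $\infty$ if $z\in\bigcap_j M_j$). For $i\ge0$, $\mathrm{End}^{(i)}_{\mathbb{k}}(M)=\{\phi\in \mathrm{End}_{\mathbb{k}}(M): \phi(M_j)\subseteq M_{j+i}\ \forall j\ge0\}$. $GL^{(0)}_{\mathbb{k}}(M)$ is the group of $\mathbb{k}$-linear automorphisms $g$ of $M$ with $g(M_j)\subseteq M_j$ and $g^{-1}(M_j)\subseteq M_j$ for all $j$; for $i\ge1$, $GL^{(i)}_{\mathbb{k}}(M)=\{g\in GL^{(0)}_{\mathbb{k}}(M): g-\mathrm{Id},\ g^{-1}-\mathrm{Id}\in \mathrm{End}^{(i)}_{\mathbb{k}}(M)\}$. For $i\ge1$ put $G^{(i)}=G^{(1)}\cap GL^{(i)}_{\mathbb{k}}(M)$ and $T^{(i)}=T\cap \mathrm{End}^{(i)}_{\mathbb{k}}(M)$. For $z\in M$, $T^{(i)}(z)=\{\xi(z):\xi\in T^{(i)}\}$ and $G^{(i)}z=\{g(z):g\in G^{(i)}\}$. For a subset $X\subseteq M$, its closure in the filtration topology is $\overline{X}=\bigcap_{j\ge1}(X+M_j)$. *)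

From HB Require Import structures.
From mathcomp Require Import all_boot all_order all_algebra.
Set Implicit Arguments. Unset Strict Implicit. Unset Printing Implicit Defensive.
Import GRing.Theory.
Local Open Scope ring_scope.

Section Filtered.
Variables (R : comPzRingType) (M : lmodType R).
Variable Mf : nat -> M -> Prop.

Definition is_submodule (S : M -> Prop) : Prop :=
  S 0 /\ forall (a : R) (x y : M), S x -> S y -> S (a *: x + y).

Definition is_filtration : Prop :=
  (forall x, Mf 0 x) /\ (forall j, is_submodule (Mf j)) /\
  (forall j x, Mf j.+1 x -> Mf j x).

Definition klinear (f : M -> M) : Prop :=
  forall (a : R) (x y : M), f (a *: x + y) = a *: f x + f y.

Definition End_i (i : nat) (f : M -> M) : Prop :=
  klinear f /\ forall j x, Mf j x -> Mf (j + i) (f x).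

Definition GL0_with_inv (g h : M -> M) : Prop :=
  klinear g /\ klinear h /\ cancel g h /\ cancel h g /\
  (forall j x, Mf j x -> Mf j (g x)) /\ (forall j x, Mf j x -> Mf j (h x)).

Definition GL0 (g : M -> M) : Prop := exists h, GL0_with_inv g h.

Definition GL_i (i : nat) (g : M -> M) : Prop :=
  exists h, GL0_with_inv g h /\
    End_i i (fun x => g x - x) /\ End_i i (fun x => h x - x).

Definition is_subgroup_GL1 (G : (M -> M) -> Prop) : Prop :=
  (forall g, G g -> GL_i 1 g) /\ G id /\
  (forall g h, G g -> G h -> G (g \o h)) /\
  (forall g, G g -> exists h, G h /\ cancel g h /\ cancel h g).

Definition is_submodule_End1 (T : (M -> M) -> Prop) : Prop :=
  (forall f, T f -> End_i 1 f) /\ T (fun _ => 0) /\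
  (forall (a : R) f g, T f -> T g -> T (fun x => a *: f x + g x)).

(* ord(z) = sup{j : z ∈ M_j}.
   ord_eq z n : "ord(z) = n" (finite), i.e. n is the supremum (= maximum,
   the set being a set of naturals) of {j | z ∈ M_j}.
   ord_gt z n : "ord(z) > n", i.e. the supremum exceeds n, i.e. some
   j > n has z ∈ M_j. *)
Definition ord_eq (z : M) (n : nat) : Prop :=
  Mf n z /\ forall j, Mf j z -> (j <= n)%N.
Definition ord_fin (z : M) : Prop := exists n, ord_eq z n.
Definition ord_gt (z : M) (n : nat) : Prop := exists j, (n < j)%N /\ Mf j z.

Definition Gi (G : (M -> M) -> Prop) (i : nat) (g : M -> M) : Prop :=
  G g /\ GL_i i g.
Definition Ti (T : (M -> M) -> Prop) (i : nat) (f : M -> M) : Prop :=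
  T f /\ End_i i f.

(* "ord(w) > ord(v)" under the hypothesis ord(v) < ∞ *)
Definition ord_improves (v w : M) : Prop :=
  forall n, ord_eq v n -> ord_gt w n.

Definition pointwise_Lie_type (T G : (M -> M) -> Prop) (i : nat) : Prop :=
  (forall xi z, Ti T i xi -> exists g, Gi G i g /\
      ord_improves (xi z) (g z - z - xi z)) /\
  (forall g z, Gi G i g -> exists xi, Ti T i xi /\
      ord_improves (g z - z) (g z - z - xi z)).

Definition Tz (T : (M -> M) -> Prop) (i : nat) (z : M) (y : M) : Prop :=
  exists xi, Ti T i xi /\ y = xi z.
Definition Gz (G : (M -> M) -> Prop) (i : nat) (z : M) (y : M) : Prop :=
  exists g, Gi G i g /\ y = g z.

(* closure in the filtration topology: ⋂_{j≥1} (X + M_j) *)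
Definition filt_closure (X : M -> Prop) (y : M) : Prop :=
  forall j, (1 <= j)%N -> exists x m, X x /\ Mf j m /\ y = x + m.

Definition psubset (A B : M -> Prop) : Prop := forall x, A x -> B x.

Definition translate (z : M) (A : M -> Prop) (y : M) : Prop :=
  exists m, A m /\ y = z + m.
End Filtered.

(* Both sides say that every element of M_{N+1} is approximable to any order
   by elements of T^{(i)}(z), resp. by displacements g z - z with g in G^{(i)}.
   The pointwise Lie condition turns an approximant of one kind of exact order
   n into one of the other kind agreeing with it beyond order n, so a
   filtration-M_p approximation problem is solved modulo M_{p+1}.  Iterating
   needs the displacements to be additive up to higher order: T^{(i)}(z) is an
   additive group, and (gh)z - z = (gz - z) + (hz - z) + (g - Id)(hz - z),
   whose last term lies in M_{p+i}, inside M_{p+1}, when hz - z is in M_p. *)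

From mathcomp Require Import all_boot all_order all_algebra.
From Stdlib Require Import Classical.
Set Implicit Arguments. Unset Strict Implicit.
Import GRing.Theory.
Local Open Scope ring_scope.

Section Filtration.
Variables (R : comPzRingType) (M : lmodType R) (Mf : nat -> M -> Prop).
Hypothesis HMf : is_filtration Mf.

Lemma filtration_le a b x : (b <= a)%N -> Mf a x -> Mf b x.
Proof.
have [_ [_ Mf_desc]] := HMf.
move=> le_ba; rewrite -(subnK le_ba); elim: (a - b)%N => // k IHk.
by move/Mf_desc; exact: IHk.
Qed.

Lemma filtration0 j : Mf j 0.
Proof. by have [_ [/(_ j) []]] := HMf. Qed.

Lemma filtration_comb j a x y : Mf j x -> Mf j y -> Mf j (a *: x + y).
Proof. by have [_ [/(_ j) [_ Mj_comb]]] := HMf; move=> Mx My; exact: Mj_comb. Qed.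

Lemma filtrationD j x y : Mf j x -> Mf j y -> Mf j (x + y).
Proof. by move=> Mx My; rewrite -[x]scale1r; exact: filtration_comb. Qed.

Lemma filtrationN j x : Mf j x -> Mf j (- x).
Proof.
by move=> Mx; rewrite -scaleN1r -[_ *: x]addr0; apply: filtration_comb Mx (filtration0 j).
Qed.

Lemma filtrationB j x y : Mf j x -> Mf j y -> Mf j (x - y).
Proof. by move=> Mx My; apply: filtrationD Mx (filtrationN My). Qed.

Lemma ord_infVeq w : (forall j, Mf j w) \/ exists n, ord_eq Mf w n.
Proof.
have [|no_ord] := classic (exists n, ord_eq Mf w n); [by right | left].
have [Mf0 _] := HMf.
elim=> // j IHj; apply: NNPP => notMj; apply: no_ord; exists j; split=> // k Mkw.
by rewrite leqNgt; apply/negP => lt_jk; apply: notMj; exact: filtration_le Mkw.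
Qed.

Lemma ord_eq_approx w x n : ord_eq Mf w n -> Mf n.+1 (x - w) -> ord_eq Mf x n.
Proof.
move=> [Mnw max_n] Mxw.
have -> : x = (x - w) + w by rewrite subrK.
split; first by apply: filtrationD (filtration_le (leqnSn n) Mxw) Mnw.
move=> j Mjx; rewrite leqNgt; apply/negP => lt_nj.
have : Mf n.+1 w.
  have -> : w = (x - w) + w - (x - w) by rewrite addrC addKr.
  by apply: filtrationB Mxw; exact: filtration_le Mjx.
by move/max_n; rewrite ltnn.
Qed.

Lemma ord_gt_filtration x n : ord_gt Mf x n -> Mf n.+1 x.
Proof. by move=> [j [lt_nj Mjx]]; exact: filtration_le Mjx. Qed.

Lemma ord_gtN x n : ord_gt Mf x n -> ord_gt Mf (- x) n.
Proof. by move=> [j [lt_nj Mjx]]; exists j; split=> //; exact: filtrationN. Qed.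

Definition approximable (S : M -> Prop) (y : M) : Prop :=
  forall j, exists2 s, S s & Mf j (s - y).

Lemma filt_closure_approximable X y : filt_closure Mf X y <-> approximable X y.
Proof.
split=> [closure_y j | approx_y j _].
  have [x [m [Xx [Mm ->]]]] := closure_y j.+1 isT.
  exists x => //; rewrite opprD addrA subrr sub0r.
  by apply: filtrationN; exact: filtration_le Mm.
have [s Ss Msy] := approx_y j; exists s, (y - s); split=> //.
by split; [rewrite -opprB; exact: filtrationN | rewrite addrC subrK].
Qed.

Lemma psubset_closureP A X :
  psubset A (filt_closure Mf X) <-> psubset A (approximable X).
Proof. by split=> sub x /sub /filt_closure_approximable. Qed.

Lemma psubset_translate_closureP z A X :
  psubset (translate z A) (filt_closure Mf X) <->
  psubset A (approximable (fun s => X (z + s))).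
Proof.
split=> [sub w Aw j | sub _ [w [Aw ->]]].
  have /filt_closure_approximable/(_ j) [s Xs Ms] := sub _ (ex_intro _ w (conj Aw erefl)).
  by exists (s - z); [rewrite addrC subrK | rewrite -addrA -opprD].
apply/filt_closure_approximable => j; have [s Xs Ms] := sub w Aw j.
by exists (z + s) => //; rewrite [z + s]addrC addrKA.
Qed.

Section Transfer.
Variables (S S' : M -> Prop) (N : nat).
Hypothesis S'0 : S' 0.
Hypothesis lift : forall s n, S s -> ord_eq Mf s n -> exists2 t, S' t & ord_gt Mf (t - s) n.
Hypothesis S'_add : forall t1 t2 p, S' t1 -> S' t2 -> Mf p t2 ->
  exists2 t, S' t & Mf p.+1 (t - (t1 + t2)).
Hypothesis S_dense : psubset (Mf N.+1) (approximable S).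

Lemma approximable_step p w : (N < p)%N -> Mf p w -> exists2 t, S' t & Mf p.+1 (t - w).
Proof.
move=> lt_Np Mpw; have [Mw | [n ord_w]] := ord_infVeq w.
  by exists 0; rewrite // sub0r; apply: filtrationN.
have le_pn : (p <= n)%N by apply: ord_w.2.
have [s Ss Msw] := S_dense (filtration_le lt_Np Mpw) n.+1.
(* [s - w] in [M_{n+1}] forces [ord s = ord w = n], the input of [lift]. *)
have [t S't /ord_gt_filtration Mts] := lift Ss (ord_eq_approx ord_w Msw).
exists t => //; apply: (filtration_le (le_pn : (p.+1 <= n.+1)%N)).
by rewrite -(subrKA s); apply: filtrationD.
Qed.

Lemma approximable_iter k m : Mf N.+1 m -> exists2 t, S' t & Mf (N.+1 + k) (t - m).
Proof.
move=> Mm; elim: k => [|k [t S't Mtm]].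
  by exists 0; rewrite // addn0 sub0r; apply: filtrationN.
have Mmt : Mf (N.+1 + k) (m - t) by rewrite -opprB; apply: filtrationN.
have [t2 S't2 Mt2] := approximable_step (leq_addr k N.+1) Mmt.
have Mt2k : Mf (N.+1 + k) t2.
  by rewrite -(subrK (m - t) t2); apply: filtrationD Mmt; exact: filtration_le Mt2.
have [t' S't' Mt'] := S'_add S't S't2 Mt2k.
rewrite addnS; exists t' => //.
by have := filtrationD Mt' Mt2; rewrite opprB [t2 + (t - m)]addrA [t2 + t]addrC subrKA.
Qed.

Lemma approximable_transfer : psubset (Mf N.+1) (approximable S').
Proof.
move=> m Mm j; have [t S't Mtm] := approximable_iter j Mm.
by exists t => //; apply: filtration_le Mtm; rewrite leq_addl.
Qed.

End Transfer.

Lemma klinearD (f : M -> M) : klinear f -> {morph f : x y / x + y}.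
Proof. by move=> lin_f x y; have := lin_f 1 x y; rewrite !scale1r. Qed.

Lemma klinear_comp (f g : M -> M) : klinear f -> klinear g -> klinear (f \o g).
Proof. by move=> lin_f lin_g a x y /=; rewrite lin_g lin_f. Qed.

Lemma klinear_comb a (f g : M -> M) : klinear f -> klinear g -> klinear (fun x => a *: f x + g x).
Proof.
move=> lin_f lin_g b x y; rewrite lin_f lin_g !scalerDr !scalerA (mulrC a b).
by rewrite addrACA.
Qed.

Lemma End_i0 i : End_i Mf i (fun _ => 0).
Proof.
by split=> [a x y | j x _]; [rewrite scaler0 addr0 | exact: filtration0].
Qed.

Lemma End_i_comb i a (f g : M -> M) :
  End_i Mf i f -> End_i Mf i g -> End_i Mf i (fun x => a *: f x + g x).
Proof.
move=> [lin_f Mf_f] [lin_g Mf_g]; split; first exact: klinear_comb.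
by move=> j x Mx; apply: filtration_comb; [apply: Mf_f | apply: Mf_g].
Qed.

Lemma End_i_subid_comp i (g h : M -> M) : klinear g -> klinear h ->
  End_i Mf i (fun x => g x - x) -> End_i Mf i (fun x => h x - x) ->
  End_i Mf i (fun x => g (h x) - x).
Proof.
move=> lin_g lin_h [_ Mf_g] [_ Mf_h]; split.
  by move=> a x y; rewrite lin_h lin_g scalerBr opprD addrACA.
move=> j x Mx; rewrite -(subrKA (h x)).
have Mhx : Mf j (h x).
  by rewrite -(subrK x (h x)); exact: filtrationD (filtration_le (leq_addr i j) (Mf_h _ _ Mx)) Mx.
by apply: filtrationD; [apply: Mf_g | apply: Mf_h].
Qed.

Lemma GL_i_id i : GL_i Mf i id.
Proof.
have End_i_subid : End_i Mf i (fun x => id x - x).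
  by split=> [a x y | j x _]; rewrite /= !subrr ?scaler0 ?addr0 //; exact: filtration0.
by exists id; do !split=> // a x y.
Qed.

Lemma GL_i_comp i (g h : M -> M) : GL_i Mf i g -> GL_i Mf i h -> GL_i Mf i (g \o h).
Proof.
move=> [g' [[lin_g [lin_g' [gK [g'K [Mf_g Mf_g']]]]] [End_g End_g']]].
move=> [h' [[lin_h [lin_h' [hK [h'K [Mf_h Mf_h']]]]] [End_h End_h']]].
exists (h' \o g'); split; [do !split | split].
- exact: klinear_comp.
- exact: klinear_comp.
- exact: can_comp.
- exact: can_comp.
- by move=> j x /Mf_h /Mf_g.
- by move=> j x /Mf_g' /Mf_h'.
- exact: (End_i_subid_comp lin_g lin_h End_g End_h).
- exact: (End_i_subid_comp lin_h' lin_g' End_h' End_g').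
Qed.

Section PointwiseLieType.
Variables (G T : (M -> M) -> Prop) (i : nat) (z : M).
Hypotheses (HG : is_subgroup_GL1 Mf G) (HT : is_submodule_End1 Mf T).
Hypothesis lie : pointwise_Lie_type Mf T G i.

Lemma Ti0 : Ti Mf T i (fun _ => 0).
Proof. by split; [exact: HT.2.1 | exact: End_i0]. Qed.

Lemma Ti_comb a xi xi' : Ti Mf T i xi -> Ti Mf T i xi' ->
  Ti Mf T i (fun x => a *: xi x + xi' x).
Proof.
by move=> [Txi End_xi] [Txi' End_xi']; split; [exact: HT.2.2 | exact: End_i_comb].
Qed.

Lemma Gi_id : Gi Mf G i id.
Proof. by split; [exact: HG.2.1 | exact: GL_i_id]. Qed.

Lemma Gi_comp g h : Gi Mf G i g -> Gi Mf G i h -> Gi Mf G i (g \o h).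
Proof.
by move=> [Gg GLg] [Gh GLh]; split; [exact: HG.2.2.1 | exact: GL_i_comp].
Qed.

Lemma Gz_shiftP t : Gz Mf G i z (z + t) <-> exists2 g, Gi Mf G i g & t = g z - z.
Proof.
split=> [[g [Gg gz]] | [g Gg ->]]; exists g => //.
  by rewrite -gz addrC addKr.
by rewrite addrC subrK.
Qed.

Lemma Tz_lift s n : Tz Mf T i z s -> ord_eq Mf s n ->
  exists2 t, Gz Mf G i z (z + t) & ord_gt Mf (t - s) n.
Proof.
move=> [xi [Txi ->]] ord_xi; have [g [Gg improves]] := lie.1 xi z Txi.
by exists (g z - z); [apply/Gz_shiftP; exists g | exact: improves].
Qed.

Lemma Gz_lift s n : Gz Mf G i z (z + s) -> ord_eq Mf s n ->
  exists2 t, Tz Mf T i z t & ord_gt Mf (t - s) n.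
Proof.
move=> /Gz_shiftP [g Gg ->] ord_g; have [xi [Txi improves]] := lie.2 g z Gg.
exists (xi z); first by exists xi.
by rewrite -opprB; apply: ord_gtN; exact: improves.
Qed.

Lemma Tz0 : Tz Mf T i z 0.
Proof. by exists (fun _ => 0); split; first exact: Ti0. Qed.

Lemma TzD t1 t2 : Tz Mf T i z t1 -> Tz Mf T i z t2 -> Tz Mf T i z (t1 + t2).
Proof.
move=> [xi1 [Txi1 ->]] [xi2 [Txi2 ->]].
by exists (fun x => 1 *: xi1 x + xi2 x); rewrite scale1r; split; first exact: Ti_comb.
Qed.

Lemma Gz_add t1 t2 p : (1 <= i)%N -> Gz Mf G i z (z + t1) -> Gz Mf G i z (z + t2) ->
  Mf p t2 -> exists2 t, Gz Mf G i z (z + t) & Mf p.+1 (t - (t1 + t2)).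
Proof.
move=> i_gt0 /Gz_shiftP [g Gg ->] /Gz_shiftP [h Gh ->] Mp_hz.
exists (g (h z) - z); first by apply/Gz_shiftP; exists (g \o h); first exact: Gi_comp.
have [_ [_ [[lin_g _] [[_ Mf_g] _]]]] := Gg.
have -> : g (h z) - z - (g z - z + (h z - z)) = g (h z - z) - (h z - z).
  by rewrite -{1}(subrK z (h z)) (klinearD lin_g (h z - z) z) -[_ + g z - z]addrA addrKA.
by apply: (filtration_le _ (Mf_g _ _ Mp_hz)); rewrite -addn1 leq_add2l.
Qed.

End PointwiseLieType.
End Filtration.

Theorem theorem4p1 (R : comPzRingType) (M : lmodType R) (Mf : nat -> M -> Prop)
  (G : (M -> M) -> Prop) (T : (M -> M) -> Prop) (i : nat) :
  is_filtration Mf ->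
  is_subgroup_GL1 Mf G ->
  is_submodule_End1 Mf T ->
  (1 <= i)%N ->
  pointwise_Lie_type Mf T G i ->
  forall (z : M) (N : nat),
    psubset (Mf N.+1) (filt_closure Mf (Tz Mf T i z)) <->
    psubset (translate z (Mf N.+1)) (filt_closure Mf (Gz Mf G i z)).
Proof.
move=> HMf HG HT i_gt0 lie z N.
split=> [/(psubset_closureP HMf) T_dense | /(psubset_translate_closureP HMf) G_dense].
  apply/(psubset_translate_closureP HMf); apply: (approximable_transfer HMf _ _ _ T_dense).
  - by apply/Gz_shiftP; exists id; [exact: Gi_id | rewrite subrr].
  - exact: Tz_lift.
  - by move=> t1 t2 p; exact: Gz_add.
apply/(psubset_closureP HMf); apply: (approximable_transfer HMf _ _ _ G_dense).
- exact: Tz0.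
- exact: Gz_lift.
- move=> t1 t2 p Tt1 Tt2 _; exists (t1 + t2); first exact: TzD.
  by rewrite subrr; exact: filtration0.
Qed.
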